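(* Let $H=(H,\Delta,\epsilon,\phi,S,\alpha,\beta)$ be a quasi-Hopf algebra over a field $k$, and let $K\subseteq H$ be a finite-dimensional subquasibialgebra (a subalgebra with $\Delta(K)\subseteq K\otimes K$ and $\phi\in K\otimes K\otimes K$) such that $$S(\phi^{(-1)})\alpha\phi^{(-2)}\otimes\phi^{(-3)}\in K\otimes K.$$ Then $\alpha,\beta\in K$ and $S(K)\subseteq K$, so $K$ is a quasi-Hopf subalgebra of $H$ (with quasi-antipode the restriction of $(S,\alpha,\beta)$).
   Context: A quasibialgebra $(H,\Delta,\epsilon,\phi)$ over a field $k$ consists of an algebra $H$, algebra maps $\Delta\colon H\to H\otimes H$, $h\mapsto h_{(1)}\otimes h_{(2)}$, and $\epsilon\colon H\to k$, and an invertible $\phi=\phi^{(1)}\otimes\phi^{(2)}\otimes\phi^{(3)}\in H^{\otimes 3}$ (with $\phi^{-1}=\phi^{(-1)}\otimes\phi^{(-2)}\otimes\phi^{(-3)}$) such that $(\epsilon\otimes H)\Delta(h)=h=(H\otimes\epsilon)\Delta(h)$; $(H\otimes\Delta)\Delta(h)\,\phi=\phi\,(\Delta\otimes H)\Delta(h)$; $(H\otimes H\otimes\Delta)(\phi)(\Delta\otimes H\otimes H)(\phi)=(1\otimes\phi)(H\otimes\Delta\otimes H)(\phi)(\phi\otimes 1)$; and $(H\otimes\epsilon\otimes H)(\phi)=1$. A quasi-antipode is a triple $(S,\alpha,\beta)$ with $\alpha,\beta\in H$ and $S$ an anti-algebra endomorphism of $H$ (not required to be bijective) such that for all $h\in H$: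 $S(h_{(1)})\alpha h_{(2)}=\epsilon(h)\alpha$, $h_{(1)}\beta S(h_{(2)})=\epsilon(h)\beta$, $\phi^{(1)}\beta S(\phi^{(2)})\alpha\phi^{(3)}=1$, $S(\phi^{(-1)})\alpha\phi^{(-2)}\beta S(\phi^{(-3)})=1$. A quasi-Hopf algebra is a quasibialgebra with a quasi-antipode. A quasi-Hopf subalgebra is a subquasibialgebra $K$ with $S(K)\subseteq K$ and $\alpha,\beta\in K$. *)

(* Tensor powers H^{(x)n} (n = 2,3,4) are represented by formal finite sums
   (sequences of tuples of elements of H); two formal sums denote the same
   tensor iff they agree under every product of linear functionals
   (over a field, V (x) W embeds into (V* (x) W* )*, so this is exactly
   equality in the tensor product). *)
From HB Require Import structures.
From mathcomp Require Import all_boot all_order all_algebra.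
Set Implicit Arguments. Unset Strict Implicit. Unset Printing Implicit Defensive.
Import GRing.Theory.
Local Open Scope ring_scope.

Section QuasiHopf.
Variables (k : fieldType) (H : algType k).

Definition tens2 := seq (H * H)%type.
Definition tens3 := seq (H * H * H)%type.
Definition tens4 := seq (H * H * H * H)%type.

Definition teq2 (t u : tens2) : Prop :=
  forall f g : {scalar H},
    \sum_(p <- t) f p.1 * g p.2 = \sum_(p <- u) f p.1 * g p.2.
Definition teq3 (t u : tens3) : Prop :=
  forall f g h : {scalar H},
    \sum_(p <- t) f p.1.1 * g p.1.2 * h p.2 =
    \sum_(p <- u) f p.1.1 * g p.1.2 * h p.2.
Definition teq4 (t u : tens4) : Prop :=
  forall f g h l : {scalar H},
    \sum_(p <- t) f p.1.1.1 * g p.1.1.2 * h p.1.2 * l p.2 =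
    \sum_(p <- u) f p.1.1.1 * g p.1.1.2 * h p.1.2 * l p.2.

Definition mul2 (t u : tens2) : tens2 :=
  [seq (p.1 * q.1, p.2 * q.2) | p <- t, q <- u].
Definition mul3 (t u : tens3) : tens3 :=
  [seq (p.1.1 * q.1.1, p.1.2 * q.1.2, p.2 * q.2) | p <- t, q <- u].
Definition mul4 (t u : tens4) : tens4 :=
  [seq (p.1.1.1 * q.1.1.1, p.1.1.2 * q.1.1.2, p.1.2 * q.1.2, p.2 * q.2)
  | p <- t, q <- u].
Definition one2 : tens2 := [:: (1, 1)].
Definition one3 : tens3 := [:: (1, 1, 1)].

Variables (Delta : H -> tens2) (eps : H -> k) (phi phiinv : tens3).

Definition id_Delta_Delta (h : H) : tens3 :=
  [seq (p.1, q.1, q.2) | p <- Delta h, q <- Delta p.2].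
Definition Delta_id_Delta (h : H) : tens3 :=
  [seq (q.1, q.2, p.2) | p <- Delta h, q <- Delta p.1].

Definition HHDelta_phi : tens4 :=
  [seq (p.1.1, p.1.2, q.1, q.2) | p <- phi, q <- Delta p.2].
Definition DeltaHH_phi : tens4 :=
  [seq (q.1, q.2, p.1.2, p.2) | p <- phi, q <- Delta p.1.1].
Definition one_phi : tens4 := [seq (1, p.1.1, p.1.2, p.2) | p <- phi].
Definition HDeltaH_phi : tens4 :=
  [seq (p.1.1, q.1, q.2, p.2) | p <- phi, q <- Delta p.1.2].
Definition phi_one : tens4 := [seq (p.1.1, p.1.2, p.2, 1) | p <- phi].

Record quasibialgebra : Prop := {
  Delta_linear : forall (a : k) (x y : H),
    teq2 (Delta (a *: x + y)) ([seq (a *: q.1, q.2) | q <- Delta x] ++ Delta y);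
  Delta_mul : forall x y : H, teq2 (Delta (x * y)) (mul2 (Delta x) (Delta y));
  Delta_one : teq2 (Delta 1) one2;
  eps_linear : forall (a : k) (x y : H), eps (a *: x + y) = a * eps x + eps y;
  eps_mul : forall x y : H, eps (x * y) = eps x * eps y;
  eps_one : eps 1 = 1;
  phi_inv_r : teq3 (mul3 phi phiinv) one3;
  phi_inv_l : teq3 (mul3 phiinv phi) one3;
  counit_l : forall h : H, \sum_(q <- Delta h) eps q.1 *: q.2 = h;
  counit_r : forall h : H, \sum_(q <- Delta h) eps q.2 *: q.1 = h;
  quasi_coassoc : forall h : H,
    teq3 (mul3 (id_Delta_Delta h) phi) (mul3 phi (Delta_id_Delta h));
  pentagon : teq4 (mul4 HHDelta_phi DeltaHH_phi)
                  (mul4 (mul4 one_phi HDeltaH_phi) phi_one);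
  phi_normal : teq2 [seq (p.1.1, eps p.1.2 *: p.2) | p <- phi] one2
}.

Variables (S : H -> H) (alpha beta : H).

Record quasi_antipode : Prop := {
  S_linear : forall (a : k) (x y : H), S (a *: x + y) = a *: S x + S y;
  S_antimul : forall x y : H, S (x * y) = S y * S x;
  S_one : S 1 = 1;
  antipode_alpha : forall h : H,
    \sum_(q <- Delta h) S q.1 * alpha * q.2 = eps h *: alpha;
  antipode_beta : forall h : H,
    \sum_(q <- Delta h) q.1 * beta * S q.2 = eps h *: beta;
  antipode_phi :
    \sum_(p <- phi) p.1.1 * beta * S p.1.2 * alpha * p.2 = 1;
  antipode_phiinv :
    \sum_(p <- phiinv) S p.1.1 * alpha * p.1.2 * beta * S p.2 = 1
}.

Definition quasi_hopf : Prop := quasibialgebra /\ quasi_antipode.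

Definition in_tensor2 (K : pred H) (t : tens2) : Prop :=
  exists u : tens2, (forall p, p \in u -> (p.1 \in K) && (p.2 \in K)) /\ teq2 t u.
Definition in_tensor3 (K : pred H) (t : tens3) : Prop :=
  exists u : tens3,
    (forall p, p \in u -> [&& p.1.1 \in K, p.1.2 \in K & p.2 \in K]) /\ teq3 t u.

Definition subquasibialgebra (K : pred H) : Prop :=
  [/\ 1 \in K,
      forall (a : k) (x y : H), x \in K -> y \in K -> a *: x + y \in K,
      forall x y : H, x \in K -> y \in K -> x * y \in K,
      forall x : H, x \in K -> in_tensor2 K (Delta x)
    & in_tensor3 K phi].

End QuasiHopf.

Definition finite_dim (k : fieldType) (H : lmodType k) (K : pred H) : Prop :=
  exists s : seq H, (forall x, x \in s -> x \in K) /\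
    forall x, x \in K -> exists c : 'I_(size s) -> k,
      x = \sum_(i < size s) c i *: s`_i.

(* Let q_L = S(phi^(-1)) alpha phi^(-2) (x) phi^(-3) and Gamma(x (x) y) = (x (x) 1) q_L Delta(y);
   the hypothesis on q_L says that Gamma maps K (x) K into itself.  The map
   Lambda(c (x) d) = c phi^(1) beta S(d_(1) phi^(2)) (x) d_(2) phi^(3) sends q_L Delta(b) to
   1 (x) b (quasi-coassociativity, the pentagon for phi^(-1) and the antipode axioms), so
   Lambda o Gamma = id and Gamma is injective, hence bijective on the finite-dimensional
   space K (x) K.  As x (x) y |-> x beta S(y) sends Gamma(x (x) y) to eps(y) x, it maps
   K (x) K into K: evaluated at 1 (x) 1 and at q_L (1 (x) x) it gives beta and S(x).
   Finally alpha = (id (x) eps)(q_L) by the normalisation of phi^(-1).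
   Tensors are formal sums compared through products of functionals; since H may be
   infinite-dimensional, Zorn's lemma is needed to supply enough functionals. *)
From HB Require Import structures.
From mathcomp Require Import all_boot all_order all_algebra.
From mathcomp Require Import boolp classical_sets.
From mathcomp Require Import ring.
From Stdlib Require Import Setoid Morphisms.
Import GRing.Theory.
Local Open Scope classical_set_scope.
Local Open Scope ring_scope.
Set Implicit Arguments. Unset Strict Implicit. Unset Printing Implicit Defensive.

Definition scalar_of (k : fieldType) (V : lmodType k) (f : V -> k) (f_scalar : scalar f)
    : {scalar V} :=
  HB.pack_for {scalar V} f (GRing.isLinear.Build k V k^o *%R f f_scalar).

Section Duality.
Variables (k : fieldType) (V : lmodType k).

Lemma scalar_sum (I : Type) (r : seq I) (L : I -> V -> k) :
  (forall i, scalar (L i)) -> scalar (fun x => \sum_(i <- r) L i x).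
Proof.
by move=> L_scalar a x y; rewrite mulr_sumr -big_split; apply: eq_bigr => i _; apply: L_scalar.
Qed.

Lemma scalar_mulr (L : V -> k) c : scalar L -> scalar (fun x => L x * c).
Proof. by move=> L_scalar a x y; rewrite L_scalar mulrDl mulrA. Qed.

Lemma scalar_mull (L : V -> k) c : scalar L -> scalar (fun x => c * L x).
Proof. by move=> L_scalar a x y; rewrite L_scalar mulrDr mulrCA. Qed.

Definition subspace (W : set V) := W 0 /\ forall a x y, W x -> W y -> W (a *: x + y).

Lemma subspaceD (W : set V) x y : subspace W -> W x -> W y -> W (x + y).
Proof. by move=> [_ WP] Wx Wy; have := WP 1 x y Wx Wy; rewrite scale1r. Qed.

Lemma subspaceZ (W : set V) a x : subspace W -> W x -> W (a *: x).
Proof. by move=> [W0 WP] Wx; have := WP a x 0 Wx W0; rewrite addr0. Qed.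

Lemma subspaceB (W : set V) x y : subspace W -> W x -> W y -> W (x - y).
Proof. by move=> sW Wx Wy; rewrite -scaleN1r addrC; case: sW => _; apply. Qed.

(* [Zorn_bigcup] also needs the union of the empty chain, hence the empty sets in [P]. *)
Lemma maximal_subspace_avoiding (W : set V) x : subspace W -> ~ W x ->
  exists A, [/\ subspace A, W `<=` A, ~ A x &
                forall B, subspace B -> A `<` B -> B x].
Proof.
move=> sW nWx.
pose good A := [/\ subspace A, W `<=` A & ~ A x].
pose P A := (forall t, ~ A t) \/ good A.
have chainP F : F `<=` P -> total_on F subset -> P (\bigcup_(X in F) X).
  move=> FP tot; have goodF X t : F X -> X t -> good X by move=> /FP [/(_ t)|].
  case: (pselect (exists X t, F X /\ X t)) => [[Y [t [FY Yt]]]|none]; last first.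
    by left=> t [X FX Xt]; apply: none; exists X, t.
  have [[Y0 _] WY _] := goodF Y t FY Yt.
  right; split; last 2 first.
  - by move=> y Wy; exists Y => //; apply: WY.
  - by move=> [X FX Xx]; have [_ _] := goodF X x FX Xx; apply.
  split; first by exists Y.
  move=> a u v [X1 FX1 X1u] [X2 FX2 X2v].
  have [[_ s1] _ _] := goodF X1 u FX1 X1u; have [[_ s2] _ _] := goodF X2 v FX2 X2v.
  case: (tot X1 X2 FX1 FX2) => [X12|X21].
    by exists X2 => //; apply: s2 => //; apply: X12.
  by exists X1 => //; apply: s1 => //; apply: X21.
have [A [PA maxA]] := Zorn_bigcup chainP.
have [A0|[sA WA nAx]] := PA.
  have AW : A `<` W by split=> [y /A0|/(_ 0 (proj1 sW))/A0].
  by exfalso; apply: (maxA W AW); right; split.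
exists A; split=> // B sB AB; apply: contrapT => nBx.
by apply: (maxA B AB); right; split=> // y Wy; apply: (proj1 AB); apply: WA.
Qed.

Lemma maximal_avoiding_complement (A : set V) x :
  subspace A -> ~ A x -> (forall B, subspace B -> A `<` B -> B x) ->
  forall y, exists c, A (y - c *: x).
Proof.
move=> sA nAx maxA y; case: (pselect (A y)) => [Ay|nAy].
  by exists 0; rewrite scale0r subr0.
pose B z := exists a c, A a /\ z = a + c *: y.
have sB : subspace B.
  split; first by exists 0, 0; rewrite scale0r addr0; split => //; case: sA.
  move=> a _ _ [a1 [c1 [A1 ->]]] [a2 [c2 [A2 ->]]].
  exists (a *: a1 + a2), (a * c1 + c2); split; first by case: sA => _; apply.
  by rewrite scalerDr scalerDl scalerA addrACA.
have AB : A `<` B.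
  split=> [z Az|BA]; first by exists z, 0; rewrite scale0r addr0.
  by apply: nAy; apply: BA; exists 0, 1; rewrite scale1r add0r; split => //; case: sA.
have [a [c [Aa xE]]] := maxA B sB AB.
have c0 : c != 0 by apply: contra_notN nAx => /eqP c0; rewrite xE c0 scale0r addr0.
exists c^-1; have -> : y - c^-1 *: x = (- c^-1) *: a.
  by rewrite xE scalerDr scalerA mulVf // scale1r scaleNr opprD addrCA subrr addr0.
exact: subspaceZ.
Qed.

Lemma separating_scalar (W : set V) x : subspace W -> ~ W x ->
  exists f : {scalar V}, (forall y, W y -> f y = 0) /\ f x = 1.
Proof.
move=> sW nWx; have [A [sA WA nAx maxA]] := maximal_subspace_avoiding sW nWx.
have coefE y c c' : A (y - c *: x) -> A (y - c' *: x) -> c = c'.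
  move=> Ac Ac'; apply: contrapT => /eqP ncc; apply: nAx.
  have : A ((c' - c) *: x).
    have -> : (c' - c) *: x = (y - c *: x) - (y - c' *: x).
      by rewrite scalerBl opprB [_ + (_ - y)]addrC addrA subrK.
    exact: subspaceB.
  move/(subspaceZ (c' - c)^-1 sA); rewrite scalerA mulVf ?scale1r //.
  by rewrite subr_eq0 eq_sym.
pose f y := projT1 (cid (maximal_avoiding_complement sA nAx maxA y)).
have fP y : A (y - f y *: x) by rewrite /f; case: cid.
have f_scalar : scalar f.
  move=> a y z; apply: (coefE (a *: y + z)); first exact: fP.
  have -> : a *: y + z - (a * f y + f z) *: x = a *: (y - f y *: x) + (z - f z *: x).
    by rewrite scalerDl -scalerA scalerBr addrACA opprD.
  by apply: (proj2 sA); apply: fP.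
exists (scalar_of f_scalar); split=> [y Wy|] /=.
  by apply: (coefE y) => //; rewrite scale0r subr0; apply: WA.
by apply: (coefE x) => //; rewrite scale1r subrr; exact: (proj1 sA).
Qed.

Lemma eq_from_scalars (x y : V) : (forall f : {scalar V}, f x = f y) -> x = y.
Proof.
move=> fxy; apply: contrapT => /eqP; rewrite -subr_eq0 => /eqP nxy.
have s0 : subspace (fun z : V => z = 0) by split=> // a _ _ -> ->; rewrite scaler0 addr0.
have [f [_ f1]] := separating_scalar s0 nxy.
by move: f1; rewrite linearB /= fxy subrr => /eqP; rewrite eq_sym oner_eq0.
Qed.

Lemma scalar_expand n (w : 'I_n -> V) (g : 'I_n -> {scalar V}) (L : V -> k) y :
  scalar L -> y = \sum_i g i y *: w i -> L y = \sum_i g i y * L (w i).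
Proof.
move=> L_scalar {1}->; rewrite -[L]/(scalar_of L_scalar : V -> k) linear_sum.
by apply: eq_bigr => i _; rewrite linearZ.
Qed.

Fixpoint in_span (s : seq V) (y : V) : Prop :=
  if s is x :: s' then exists c, in_span s' (y - c *: x) else y = 0.

Lemma subspace_span s : subspace (in_span s).
Proof.
elim: s => [|x s [IH0 IHP]] /=; first by split=> // a _ _ -> ->; rewrite scaler0 addr0.
split; first by exists 0; rewrite scale0r subr0.
move=> a u v [c1 h1] [c2 h2]; exists (a * c1 + c2).
have -> : a *: u + v - (a * c1 + c2) *: x = a *: (u - c1 *: x) + (v - c2 *: x).
  by rewrite scalerDl -scalerA scalerBr addrACA opprD.
exact: IHP.
Qed.

Lemma mem_span s x : x \in s -> in_span s x.
Proof.
elim: s => [|y s IH] //=; rewrite inE => /predU1P [->|xs].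
  by exists 1; rewrite scale1r subrr; case: (subspace_span s).
by exists 0; rewrite scale0r subr0; apply: IH.
Qed.

Lemma span_lincomb s (c : 'I_(size s) -> k) : in_span s (\sum_(i < size s) c i *: s`_i).
Proof.
apply: (big_ind (in_span s)); first by case: (subspace_span s).
  by move=> u v; apply: subspaceD; apply: subspace_span.
by move=> i _; apply: subspaceZ; [apply: subspace_span | apply/mem_span/mem_nth].
Qed.

Lemma dual_basis s : exists n (w : 'I_n -> V) (g : 'I_n -> {scalar V}),
  [/\ forall i, w i \in s, forall i j, g i (w j) = (i == j)%:R
    & forall y, in_span s y -> y = \sum_i g i y *: w i].
Proof.
elim: s => [|x s [n [w [g [ws gw rep]]]]].
  exists 0%N, (fun _ => 0), (fun _ => \0).
  by split=> [[]|[]|y /= ->]//; rewrite big_ord0.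
case: (pselect (in_span s x)) => [sx|nsx].
  exists n, w, g; split=> [i| |y [c sy]] //; first by rewrite inE ws orbT.
  apply: rep; rewrite -[y](subrK (c *: x)).
  by apply: subspaceD (subspace_span s) _ _ => //; apply: subspaceZ (subspace_span s) _.
have [h [h0 h1]] := separating_scalar (subspace_span s) nsx.
have g'_scalar j : scalar (fun y => g j (y - h y *: x)).
  move=> a u v; rewrite -linearP /=; congr (g j _).
  by rewrite linearP scalerDl -scalerA scalerBr addrACA opprD.
pose w' (i : 'I_n.+1) := if unlift ord0 i is Some j then w j else x.
pose g' (i : 'I_n.+1) := if unlift ord0 i is Some j then scalar_of (g'_scalar j) else h.
have hw j : h (w j) = 0 by apply/h0/mem_span.
exists n.+1, w', g'; split.
- move=> i; rewrite /w'; case: (unliftP ord0 i) => [j _|_]; last by rewrite inE eqxx.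
  by rewrite inE ws orbT.
- move=> i j; rewrite /w' /g'.
  case: (unliftP ord0 i) => [i' ->|->]; case: (unliftP ord0 j) => [j' ->|->] /=.
  + by rewrite hw scale0r subr0 gw (inj_eq (@lift_inj _ ord0)).
  + by rewrite h1 scale1r subrr linear0.
  + by rewrite hw.
  + by rewrite h1.
- move=> y [c sy]; rewrite big_ord_recl /w' /g' unlift_none.
  under eq_bigr => i _ do rewrite liftK /=.
  have hy : h y = c.
    by move: (h0 _ sy); rewrite linearB linearZ /= h1 mulr1 => /eqP; rewrite subr_eq0 => /eqP.
  by rewrite -(rep _ (_ : in_span s (y - h y *: x))) ?hy // addrC subrK.
Qed.

End Duality.

Section Tensors.
Variables (k : fieldType) (H : algType k).

Fact premul_subproof (f : {scalar H}) a : scalar (fun y => f (a * y)).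
Proof. by move=> c x y; rewrite mulrDr -scalerAr linearP. Qed.
Definition premul f a := scalar_of (premul_subproof f a).

Fact postmul_subproof (f : {scalar H}) a : scalar (fun y => f (y * a)).
Proof. by move=> c x y; rewrite mulrDl -scalerAl linearP. Qed.
Definition postmul f a := scalar_of (postmul_subproof f a).

#[global] Instance teq2_equiv : Equivalence (@teq2 k H).
Proof. by split=> [t|t u tu f g|t u v tu uv f g] //; rewrite tu ?uv. Qed.
#[global] Instance teq3_equiv : Equivalence (@teq3 k H).
Proof. by split=> [t|t u tu f g h|t u v tu uv f g h] //; rewrite tu ?uv. Qed.
#[global] Instance teq4_equiv : Equivalence (@teq4 k H).
Proof. by split=> [t|t u tu f g h l|t u v tu uv f g h l] //; rewrite tu ?uv. Qed.

Lemma mul2_teq (t t' u u' : tens2 H) : teq2 t t' -> teq2 u u' -> teq2 (mul2 t u) (mul2 t' u').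
Proof.
move=> tt' uu' f g; rewrite !big_allpairs_dep /=.
under eq_bigr => p _ do rewrite (uu' (premul f p.1) (premul g p.2)).
rewrite exchange_big [RHS]exchange_big; apply: eq_bigr => q _.
exact: (tt' (postmul f q.1) (postmul g q.2)).
Qed.

Lemma mul3_teq (t t' u u' : tens3 H) : teq3 t t' -> teq3 u u' -> teq3 (mul3 t u) (mul3 t' u').
Proof.
move=> tt' uu' f g h; rewrite !big_allpairs_dep /=.
under eq_bigr => p _ do rewrite (uu' (premul f p.1.1) (premul g p.1.2) (premul h p.2)).
rewrite exchange_big [RHS]exchange_big; apply: eq_bigr => q _.
exact: (tt' (postmul f q.1.1) (postmul g q.1.2) (postmul h q.2)).
Qed.

Lemma mul4_teq (t t' u u' : tens4 H) : teq4 t t' -> teq4 u u' -> teq4 (mul4 t u) (mul4 t' u').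
Proof.
move=> tt' uu' f g h l; rewrite !big_allpairs_dep /=.
under eq_bigr => p _ do
  rewrite (uu' (premul f p.1.1.1) (premul g p.1.1.2) (premul h p.1.2) (premul l p.2)).
rewrite exchange_big [RHS]exchange_big; apply: eq_bigr => q _.
exact: (tt' (postmul f q.1.1.1) (postmul g q.1.1.2) (postmul h q.1.2) (postmul l q.2)).
Qed.

#[global] Instance mul3_proper : Proper (@teq3 k H ==> @teq3 k H ==> @teq3 k H) (@mul3 k H).
Proof. by move=> ? ? ? ? ? ?; apply: mul3_teq. Qed.
#[global] Instance mul4_proper : Proper (@teq4 k H ==> @teq4 k H ==> @teq4 k H) (@mul4 k H).
Proof. by move=> ? ? ? ? ? ?; apply: mul4_teq. Qed.

Definition one4 : tens4 H := [:: (1, 1, 1, 1)].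

Lemma mul3A (t u v : tens3 H) : teq3 (mul3 (mul3 t u) v) (mul3 t (mul3 u v)).
Proof.
move=> f g h; rewrite !big_allpairs_dep; apply: eq_bigr => p _.
by rewrite big_allpairs_dep; apply: eq_bigr => q _; apply: eq_bigr => r _; rewrite !mulrA.
Qed.

Lemma mul4A (t u v : tens4 H) : teq4 (mul4 (mul4 t u) v) (mul4 t (mul4 u v)).
Proof.
move=> f g h l; rewrite !big_allpairs_dep; apply: eq_bigr => p _.
by rewrite big_allpairs_dep; apply: eq_bigr => q _; apply: eq_bigr => r _; rewrite !mulrA.
Qed.

Lemma mul3_onel (t : tens3 H) : teq3 (mul3 (one3 H) t) t.
Proof. by move=> f g h; rewrite big_allpairs_dep big_seq1; apply: eq_bigr => *; rewrite !mul1r. Qed.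

Lemma mul3_oner (t : tens3 H) : teq3 (mul3 t (one3 H)) t.
Proof. by move=> f g h; rewrite big_allpairs_dep; apply: eq_bigr => *; rewrite big_seq1 !mulr1. Qed.

Lemma mul4_onel (t : tens4 H) : teq4 (mul4 one4 t) t.
Proof.
by move=> f g h l; rewrite big_allpairs_dep big_seq1; apply: eq_bigr => *; rewrite !mul1r.
Qed.

Lemma mul4_oner (t : tens4 H) : teq4 (mul4 t one4) t.
Proof.
by move=> f g h l; rewrite big_allpairs_dep; apply: eq_bigr => *; rewrite big_seq1 !mulr1.
Qed.

(* Equality in [H (x) H] is tested on products of functionals only; a dual basis of the
   finitely many components extends it to every bilinear form. *)
Lemma teq2_bilinear (t u : tens2 H) (F : H -> H -> k) :
  (forall b, scalar (F^~ b)) -> (forall a, scalar (F a)) -> teq2 t u ->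
  \sum_(p <- t) F p.1 p.2 = \sum_(p <- u) F p.1 p.2.
Proof.
move=> F1 F2 tu.
pose s := [seq p.1 | p <- t ++ u] ++ [seq p.2 | p <- t ++ u].
have [n [w [g [_ _ rep]]]] := dual_basis s.
have expand v : {subset v <= t ++ u} -> \sum_(p <- v) F p.1 p.2 =
    \sum_i \sum_j (\sum_(p <- v) g i p.1 * g j p.2) * F (w i) (w j).
  move=> vtu; rewrite big_seq (eq_bigr (fun p => \sum_i \sum_j
      g i p.1 * g j p.2 * F (w i) (w j))) -?big_seq; last first.
    move=> p /vtu ptu.
    have s1 : in_span s p.1 by apply/mem_span; rewrite !mem_cat !(map_f _ ptu).
    have s2 : in_span s p.2 by apply/mem_span; rewrite !mem_cat !(map_f _ ptu) orbT.
    rewrite (scalar_expand (F1 _) (rep _ s1)); apply: eq_bigr => i _.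
    rewrite (scalar_expand (F2 _) (rep _ s2)) mulr_sumr.
    by apply: eq_bigr => j _; rewrite mulrA.
  rewrite exchange_big; apply: eq_bigr => i _; rewrite exchange_big.
  by apply: eq_bigr => j _; rewrite mulr_suml.
rewrite !expand => [|p|p]; last 2 first.
- by rewrite mem_cat => ->; rewrite orbT.
- by rewrite mem_cat => ->.
by apply: eq_bigr => i _; apply: eq_bigr => j _; rewrite tu.
Qed.

Lemma teq4_multilinear (t u : tens4 H) (F : H -> H -> H -> H -> k) :
  (forall b c d, scalar (fun a => F a b c d)) -> (forall a c d, scalar (fun b => F a b c d)) ->
  (forall a b d, scalar (fun c => F a b c d)) -> (forall a b c, scalar (F a b c)) ->
  teq4 t u ->
  \sum_(p <- t) F p.1.1.1 p.1.1.2 p.1.2 p.2 = \sum_(p <- u) F p.1.1.1 p.1.1.2 p.1.2 p.2.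
Proof.
move=> F1 F2 F3 F4 tu.
pose s := [seq p.1.1.1 | p <- t ++ u] ++ [seq p.1.1.2 | p <- t ++ u] ++
          [seq p.1.2 | p <- t ++ u] ++ [seq p.2 | p <- t ++ u].
have [n [w [g [_ _ rep]]]] := dual_basis s.
have expand v : {subset v <= t ++ u} -> \sum_(p <- v) F p.1.1.1 p.1.1.2 p.1.2 p.2 =
    \sum_i \sum_j \sum_l \sum_m
      (\sum_(p <- v) g i p.1.1.1 * g j p.1.1.2 * g l p.1.2 * g m p.2) *
      F (w i) (w j) (w l) (w m).
  move=> vtu; rewrite big_seq (eq_bigr (fun p => \sum_i \sum_j \sum_l \sum_m
      g i p.1.1.1 * g j p.1.1.2 * g l p.1.2 * g m p.2 * F (w i) (w j) (w l) (w m)))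
      -?big_seq; last first.
    move=> p /vtu ptu.
    have s1 : in_span s p.1.1.1 by apply/mem_span; rewrite !mem_cat !(map_f _ ptu) ?orbT.
    have s2 : in_span s p.1.1.2 by apply/mem_span; rewrite !mem_cat !(map_f _ ptu) ?orbT.
    have s3 : in_span s p.1.2 by apply/mem_span; rewrite !mem_cat !(map_f _ ptu) ?orbT.
    have s4 : in_span s p.2 by apply/mem_span; rewrite !mem_cat !(map_f _ ptu) ?orbT.
    rewrite (scalar_expand (F1 _ _ _) (rep _ s1)); apply: eq_bigr => i _.
    rewrite (scalar_expand (F2 _ _ _) (rep _ s2)) mulr_sumr; apply: eq_bigr => j _.
    rewrite (scalar_expand (F3 _ _ _) (rep _ s3)) !mulr_sumr; apply: eq_bigr => l _.
    rewrite (scalar_expand (F4 _ _ _) (rep _ s4)) !mulr_sumr; apply: eq_bigr => m _.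
    by rewrite !mulrA.
  rewrite exchange_big; apply: eq_bigr => i _; rewrite exchange_big; apply: eq_bigr => j _.
  rewrite exchange_big; apply: eq_bigr => l _; rewrite exchange_big.
  by apply: eq_bigr => m _; rewrite mulr_suml.
rewrite !expand => [|p|p]; last 2 first.
- by rewrite mem_cat => ->; rewrite orbT.
- by rewrite mem_cat => ->.
do 4 (apply: eq_bigr => ? _); by rewrite tu.
Qed.

End Tensors.

Section QuasiBialgebra.
Variables (k : fieldType) (H : algType k).
Variables (Delta : H -> tens2 H) (eps : H -> k) (phi phiinv : tens3 H).
Hypothesis QB : quasibialgebra Delta eps phi phiinv.

HB.instance Definition _ := GRing.isLinear.Build k H k^o *%R eps (eps_linear QB).

Fact conv_subproof (f g : {scalar H}) : scalar (fun y => \sum_(q <- Delta y) f q.1 * g q.2).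
Proof.
move=> a x y; rewrite (Delta_linear QB a x y) big_cat big_map /= mulr_sumr.
by congr (_ + _); apply: eq_bigr => q _; rewrite linearZ /= mulrA.
Qed.
Definition conv f g := scalar_of (conv_subproof f g).

Lemma convM (f g : {scalar H}) x y : conv f g (x * y) =
  \sum_(q <- Delta x) \sum_(r <- Delta y) f (q.1 * r.1) * g (q.2 * r.2).
Proof. by rewrite /= (Delta_mul QB) big_allpairs_dep. Qed.

Lemma conv1 (f g : {scalar H}) : conv f g 1 = f 1 * g 1.
Proof. by rewrite /= (Delta_one QB) big_seq1. Qed.

Lemma counitl_sum (f : {scalar H}) x : \sum_(q <- Delta x) eps q.1 * f q.2 = f x.
Proof.
by rewrite -{2}(counit_l QB x) linear_sum; apply: eq_bigr => q _; rewrite linearZ.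
Qed.

Lemma counitr_sum (f : {scalar H}) x : \sum_(q <- Delta x) f q.1 * eps q.2 = f x.
Proof.
rewrite -{2}(counit_r QB x) linear_sum.
by apply: eq_bigr => q _; rewrite linearZ /= mulrC.
Qed.

Definition one_tens (t : tens3 H) : tens4 H := [seq (1, p.1.1, p.1.2, p.2) | p <- t].
Definition tens_one (t : tens3 H) : tens4 H := [seq (p.1.1, p.1.2, p.2, 1) | p <- t].
Definition HHDelta (t : tens3 H) : tens4 H :=
  [seq (p.1.1, p.1.2, q.1, q.2) | p <- t, q <- Delta p.2].
Definition DeltaHH (t : tens3 H) : tens4 H :=
  [seq (q.1, q.2, p.1.2, p.2) | p <- t, q <- Delta p.1.1].
Definition HDeltaH (t : tens3 H) : tens4 H :=
  [seq (p.1.1, q.1, q.2, p.2) | p <- t, q <- Delta p.1.2].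

Lemma sum_one_tens t (f g h l : {scalar H}) :
  \sum_(p <- one_tens t) f p.1.1.1 * g p.1.1.2 * h p.1.2 * l p.2 =
  f 1 * \sum_(p <- t) g p.1.1 * h p.1.2 * l p.2.
Proof. by rewrite big_map mulr_sumr; apply: eq_bigr => p _; rewrite !mulrA. Qed.

Lemma sum_tens_one t (f g h l : {scalar H}) :
  \sum_(p <- tens_one t) f p.1.1.1 * g p.1.1.2 * h p.1.2 * l p.2 =
  (\sum_(p <- t) f p.1.1 * g p.1.2 * h p.2) * l 1.
Proof. by rewrite big_map mulr_suml. Qed.

Lemma sum_HHDelta t (f g h l : {scalar H}) :
  \sum_(p <- HHDelta t) f p.1.1.1 * g p.1.1.2 * h p.1.2 * l p.2 =
  \sum_(p <- t) f p.1.1 * g p.1.2 * conv h l p.2.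
Proof.
rewrite big_allpairs_dep; apply: eq_bigr => p _ /=; rewrite mulr_sumr.
by apply: eq_bigr => q _; rewrite !mulrA.
Qed.

Lemma sum_DeltaHH t (f g h l : {scalar H}) :
  \sum_(p <- DeltaHH t) f p.1.1.1 * g p.1.1.2 * h p.1.2 * l p.2 =
  \sum_(p <- t) conv f g p.1.1 * h p.1.2 * l p.2.
Proof. by rewrite big_allpairs_dep; apply: eq_bigr => p _ /=; rewrite !mulr_suml. Qed.

Lemma sum_HDeltaH t (f g h l : {scalar H}) :
  \sum_(p <- HDeltaH t) f p.1.1.1 * g p.1.1.2 * h p.1.2 * l p.2 =
  \sum_(p <- t) f p.1.1 * conv g h p.1.2 * l p.2.
Proof.
rewrite big_allpairs_dep; apply: eq_bigr => p _ /=; rewrite mulr_sumr !mulr_suml.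
by apply: eq_bigr => q _; rewrite !mulrA.
Qed.

#[global] Instance one_tens_proper : Proper (@teq3 k H ==> @teq4 k H) one_tens.
Proof. by move=> t u tu f g h l; rewrite !sum_one_tens tu. Qed.
#[local] Instance tens_one_proper : Proper (@teq3 k H ==> @teq4 k H) tens_one.
Proof. by move=> t u tu f g h l; rewrite !sum_tens_one tu. Qed.
#[local] Instance HHDelta_proper : Proper (@teq3 k H ==> @teq4 k H) HHDelta.
Proof. by move=> t u tu f g h l; rewrite !sum_HHDelta tu. Qed.
#[local] Instance HDeltaH_proper : Proper (@teq3 k H ==> @teq4 k H) HDeltaH.
Proof. by move=> t u tu f g h l; rewrite !sum_HDeltaH tu. Qed.

Lemma tens_oneM t u : teq4 (tens_one (mul3 t u)) (mul4 (tens_one t) (tens_one u)).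
Proof.
move=> f g h l; rewrite big_map !big_allpairs_dep big_map.
by apply: eq_bigr => p _; rewrite big_map; apply: eq_bigr => q _ /=; rewrite mulr1.
Qed.

Lemma HHDeltaM t u : teq4 (HHDelta (mul3 t u)) (mul4 (HHDelta t) (HHDelta u)).
Proof.
move=> f g h l; rewrite sum_HHDelta !big_allpairs_dep; apply: eq_bigr => p _.
rewrite exchange_big big_allpairs_dep; apply: eq_bigr => q _.
rewrite convM [RHS]exchange_big /= mulr_sumr; apply: eq_bigr => r _.
by rewrite mulr_sumr; apply: eq_bigr => s _; rewrite !mulrA.
Qed.

Lemma HDeltaHM t u : teq4 (HDeltaH (mul3 t u)) (mul4 (HDeltaH t) (HDeltaH u)).
Proof.
move=> f g h l; rewrite sum_HDeltaH !big_allpairs_dep; apply: eq_bigr => p _.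
rewrite exchange_big big_allpairs_dep; apply: eq_bigr => q _.
rewrite convM [RHS]exchange_big /= mulr_sumr !mulr_suml; apply: eq_bigr => r _.
by rewrite mulr_sumr mulr_suml; apply: eq_bigr => s _; rewrite !mulrA.
Qed.

Lemma tens_one1 : teq4 (tens_one (one3 H)) (one4 H).
Proof. by move=> f g h l; rewrite big_map. Qed.
Lemma HHDelta1 : teq4 (HHDelta (one3 H)) (one4 H).
Proof. by move=> f g h l; rewrite sum_HHDelta !big_seq1 conv1 /= !mulrA. Qed.
Lemma HDeltaH1 : teq4 (HDeltaH (one3 H)) (one4 H).
Proof. by move=> f g h l; rewrite sum_HDeltaH !big_seq1 conv1 /= !mulrA. Qed.

Definition counit2 (t : tens4 H) : tens3 H :=
  [seq (p.1.1.1, eps p.1.1.2 *: p.1.2, p.2) | p <- t].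
Definition counit3 (t : tens4 H) : tens3 H :=
  [seq (p.1.1.1, p.1.1.2, eps p.1.2 *: p.2) | p <- t].

Lemma sum_counit2 t (f h l : {scalar H}) :
  \sum_(p <- counit2 t) f p.1.1 * h p.1.2 * l p.2 =
  \sum_(p <- t) f p.1.1.1 * eps p.1.1.2 * h p.1.2 * l p.2.
Proof. by rewrite big_map; apply: eq_bigr => p _ /=; rewrite linearZ /= mulrA. Qed.

Lemma sum_counit3 t (f g l : {scalar H}) :
  \sum_(p <- counit3 t) f p.1.1 * g p.1.2 * l p.2 =
  \sum_(p <- t) f p.1.1.1 * g p.1.1.2 * eps p.1.2 * l p.2.
Proof. by rewrite big_map; apply: eq_bigr => p _ /=; rewrite linearZ /= mulrA. Qed.

#[local] Instance counit2_proper : Proper (@teq4 k H ==> @teq3 k H) counit2.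
Proof. by move=> t u tu f h l; rewrite !sum_counit2 tu. Qed.
#[local] Instance counit3_proper : Proper (@teq4 k H ==> @teq3 k H) counit3.
Proof. by move=> t u tu f h l; rewrite !sum_counit3 tu. Qed.

Lemma counit2M t u : teq3 (counit2 (mul4 t u)) (mul3 (counit2 t) (counit2 u)).
Proof.
move=> f h l; rewrite sum_counit2 !big_allpairs_dep big_map; apply: eq_bigr => p _.
rewrite big_map; apply: eq_bigr => q _ /=.
by rewrite (eps_mul QB) -scalerAl -scalerAr scalerA linearZ /= !mulrA.
Qed.

Lemma counit3M t u : teq3 (counit3 (mul4 t u)) (mul3 (counit3 t) (counit3 u)).
Proof.
move=> f h l; rewrite sum_counit3 !big_allpairs_dep big_map; apply: eq_bigr => p _.
rewrite big_map; apply: eq_bigr => q _ /=.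
by rewrite (eps_mul QB) -scalerAl -scalerAr scalerA linearZ /= !mulrA.
Qed.

Lemma sum_counit2_phi (f g : {scalar H}) :
  \sum_(p <- phi) f p.1.1 * eps p.1.2 * g p.2 = f 1 * g 1.
Proof.
have := phi_normal QB f g; rewrite big_map big_seq1 /= => <-.
by apply: eq_bigr => p _; rewrite linearZ /= mulrA.
Qed.

Lemma counit2_pentagon : teq3 phi (mul3 (counit2 (one_tens phi)) phi).
Proof.
have counit2_HHDelta : teq3 (counit2 (HHDelta phi)) (one3 H).
  by move=> f g h; rewrite sum_counit2 sum_HHDelta big_seq1 sum_counit2_phi conv1 mulrA.
have counit2_DeltaHH : teq3 (counit2 (DeltaHH phi)) phi.
  by move=> f g h; rewrite sum_counit2 sum_DeltaHH; apply: eq_bigr => p _; rewrite /= counitr_sum.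
have counit2_HDeltaH : teq3 (counit2 (HDeltaH phi)) phi.
  by move=> f g h; rewrite sum_counit2 sum_HDeltaH; apply: eq_bigr => p _; rewrite /= counitl_sum.
have counit2_tens_one : teq3 (counit2 (tens_one phi)) (one3 H).
  move=> f g h; rewrite sum_counit2 sum_tens_one big_seq1 /=.
  by rewrite (sum_counit2_phi f g).
rewrite -{1}(mul3_onel phi) -counit2_HHDelta -{2}counit2_DeltaHH -counit2M (pentagon QB).
by rewrite !counit2M counit2_HDeltaH counit2_tens_one mul3_oner.
Qed.

Lemma counit3_pentagon : teq3 phi (mul3 phi (counit3 (tens_one phi))).
Proof.
have counit3_HHDelta : teq3 (counit3 (HHDelta phi)) phi.
  by move=> f g h; rewrite sum_counit3 sum_HHDelta; apply: eq_bigr => p _; rewrite /= counitl_sum.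
have counit3_DeltaHH : teq3 (counit3 (DeltaHH phi)) (one3 H).
  by move=> f g h; rewrite sum_counit3 sum_DeltaHH big_seq1 sum_counit2_phi conv1.
have counit3_HDeltaH : teq3 (counit3 (HDeltaH phi)) phi.
  by move=> f g h; rewrite sum_counit3 sum_HDeltaH; apply: eq_bigr => p _; rewrite /= counitr_sum.
have counit3_one_tens : teq3 (counit3 (one_tens phi)) (one3 H).
  move=> f g h; rewrite sum_counit3 sum_one_tens big_seq1 /= -mulrA -(sum_counit2_phi g h).
  by rewrite mulr_sumr; apply: eq_bigr => p _; rewrite !mulrA.
rewrite -{1}(mul3_oner phi) -counit3_DeltaHH -{1}counit3_HHDelta -counit3M (pentagon QB).
by rewrite !counit3M counit3_HDeltaH counit3_one_tens mul3_onel.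
Qed.

Lemma counit1_phi : teq2 [seq (eps p.1.1 *: p.1.2, p.2) | p <- phi] (one2 H).
Proof.
have E1 : teq3 (counit2 (one_tens phi)) (one3 H).
  by rewrite -[counit2 _]mul3_oner -(phi_inv_r QB) -mul3A -counit2_pentagon.
move=> f g; have := E1 eps f g; rewrite big_map !big_seq1 /= (eps_one QB) !mul1r => <-.
by rewrite !big_map; apply: eq_bigr => p _; rewrite /= (eps_one QB) mul1r.
Qed.

Lemma counit3_phi : teq2 [seq (p.1.1, eps p.2 *: p.1.2) | p <- phi] (one2 H).
Proof.
have E3 : teq3 (counit3 (tens_one phi)) (one3 H).
  by rewrite -[counit3 _]mul3_onel -(phi_inv_l QB) mul3A -counit3_pentagon.
move=> f g; have := E3 f g eps; rewrite big_map !big_seq1 /= (eps_one QB) !mulr1 => <-.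
by rewrite !big_map; apply: eq_bigr => p _ /=; rewrite !linearZ /= (eps_one QB); ring.
Qed.

Lemma counit2_phiinv : teq2 [seq (p.1.1, eps p.1.2 *: p.2) | p <- phiinv] (one2 H).
Proof.
move=> f g; have := phi_inv_l QB f eps g.
rewrite big_allpairs_dep !big_seq1 big_map /= (eps_one QB) mulr1 => <-.
apply: eq_bigr => x _; have := sum_counit2_phi (premul f x.1.1) (premul g x.2).
rewrite /= !mulr1 => E; rewrite linearZ /= mulrCA -E mulr_sumr.
by apply: eq_bigr => X _; rewrite (eps_mul QB); ring.
Qed.

Lemma counit3_phiinv : teq2 [seq (p.1.1, eps p.2 *: p.1.2) | p <- phiinv] (one2 H).
Proof.
move=> f g; have := phi_inv_r QB f g eps.
rewrite big_allpairs_dep !big_seq1 big_map /= (eps_one QB) mulr1 => <-.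
rewrite exchange_big; apply: eq_bigr => x _ /=.
have := counit3_phi (postmul f x.1.1) (postmul g x.1.2).
rewrite big_map big_seq1 /= !mul1r => E; rewrite linearZ /= mulrCA -E mulr_sumr.
by apply: eq_bigr => X _; rewrite -scalerAl linearZ /= (eps_mul QB); ring.
Qed.

Lemma inv_pentagon : teq4 (mul4 (HHDelta phiinv) (one_tens phi))
  (mul4 (mul4 (DeltaHH phi) (tens_one phiinv)) (HDeltaH phiinv)).
Proof.
have HHDeltaV : teq4 (mul4 (HHDelta phiinv) (HHDelta phi)) (one4 H).
  by rewrite -HHDeltaM (phi_inv_l QB) HHDelta1.
have tens_oneV : teq4 (mul4 (tens_one phi) (tens_one phiinv)) (one4 H).
  by rewrite -tens_oneM (phi_inv_r QB) tens_one1.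
have HDeltaHV : teq4 (mul4 (HDeltaH phi) (HDeltaH phiinv)) (one4 H).
  by rewrite -HDeltaHM (phi_inv_r QB) HDeltaH1.
rewrite -[mul4 (HHDelta _) _]mul4_oner -HDeltaHV -[HDeltaH phi]mul4_oner -tens_oneV.
rewrite !mul4A -[mul4 (one_tens _) _]mul4A -[mul4 (mul4 (one_tens _) _) _]mul4A.
rewrite -(pentagon QB) -!mul4A HHDeltaV mul4_onel.
by rewrite !mul4A.
Qed.

End QuasiBialgebra.

Ltac scalar_product :=
  move=> ? ? ? /=;
  do ![rewrite linearP | rewrite mulrDl | rewrite mulrDr | rewrite -scalerAl
      | rewrite -scalerAr].

Section QuasiHopf.
Variables (k : fieldType) (H : algType k).
Variables (Delta : H -> tens2 H) (eps : H -> k) (phi phiinv : tens3 H).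
Variables (S : H -> H) (alpha beta : H).
Hypothesis QB : quasibialgebra Delta eps phi phiinv.
Hypothesis QA : quasi_antipode Delta eps phi phiinv S alpha beta.

HB.instance Definition _ := GRing.isLinear.Build k H k^o *%R eps (eps_linear QB).
HB.instance Definition _ := GRing.isLinear.Build k H H *:%R S (S_linear QA).

Definition qL : tens2 H := [seq (S p.1.1 * alpha * p.1.2, p.2) | p <- phiinv].

Definition Gamma (t : tens2 H) : tens2 H :=
  flatten [seq mul2 (mul2 [:: (p.1, 1)] qL) (Delta p.2) | p <- t].

Definition Lambda (f g : {scalar H}) c d :=
  \sum_(X <- phi) \sum_(q <- Delta d) f (c * X.1.1 * beta * S (q.1 * X.1.2)) * g (q.2 * X.2).

Definition antipode_eval (f g : {scalar H}) (t : tens4 H) :=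
  \sum_(p <- t) f (S p.1.1.1 * alpha * p.1.1.2 * beta * S p.1.2) * g p.2.

Lemma antipode_eval_teq f g t u : teq4 t u -> antipode_eval f g t = antipode_eval f g u.
Proof.
apply: (teq4_multilinear (F := fun a b c d => f (S a * alpha * b * beta * S c) * g d)).
- by move=> *; apply: scalar_mulr; scalar_product.
- by move=> *; apply: scalar_mulr; scalar_product.
- by move=> *; apply: scalar_mulr; scalar_product.
- by move=> *; apply: scalar_mull; apply: scalarP.
Qed.

Lemma Lambda_qL_Delta f g b :
  \sum_(r <- qL) \sum_(q <- Delta b) Lambda f g (r.1 * q.1) (r.2 * q.2) =
  antipode_eval f g
    (mul4 (HHDelta Delta phiinv) (one_tens (mul3 (id_Delta_Delta Delta b) phi))).
Proof.
rewrite /qL /antipode_eval big_map !big_allpairs_dep; apply: eq_bigr => x _.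
transitivity (\sum_(q <- Delta b) \sum_(X <- phi) \sum_(s <- Delta x.2) \sum_(u <- Delta q.2)
   f (S x.1.1 * alpha * x.1.2 * q.1 * X.1.1 * beta * S (s.1 * u.1 * X.1.2)) *
   g (s.2 * u.2 * X.2)).
  apply: eq_bigr => q _; apply: eq_bigr => X _.
  have f_scalar : scalar (fun y =>
      f (S x.1.1 * alpha * x.1.2 * q.1 * X.1.1 * beta * S (y * X.1.2))) by scalar_product.
  have := Delta_mul QB x.2 q.2 (scalar_of f_scalar) (postmul g X.2).
  by rewrite big_allpairs_dep.
under [RHS]eq_bigr do rewrite big_map !big_allpairs_dep.
under [LHS]eq_bigr do rewrite exchange_big.
rewrite exchange_big; apply: eq_bigr => s _; apply: eq_bigr => q _.
rewrite exchange_big; apply: eq_bigr => u _; apply: eq_bigr => X _.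
by rewrite /= mulr1 !mulrA.
Qed.

Lemma antipode_eval_Delta_id_Delta f g b :
  antipode_eval f g
    (mul4 (HHDelta Delta phiinv) (one_tens (mul3 phi (Delta_id_Delta Delta b)))) =
  antipode_eval f (postmul g b) (mul4 (HHDelta Delta phiinv) (one_tens phi)).
Proof.
rewrite /antipode_eval !big_allpairs_dep; apply: eq_bigr => x _; apply: eq_bigr => s _.
rewrite !big_map big_allpairs_dep; apply: eq_bigr => X _; rewrite big_allpairs_dep /=.
pose c := S x.1.1 * alpha * x.1.2 * X.1.1 * beta * S X.1.2 * S s.1.
transitivity (\sum_(p <- Delta b) eps p.1 * (f c * g (s.2 * X.2 * p.2))).
  apply: eq_bigr => p _; rewrite -mulr_suml !mulrA; congr (_ * _).
  transitivity (f (\sum_(v <- Delta p.1) (S x.1.1 * alpha * x.1.2 * X.1.1) *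
      (v.1 * beta * S v.2) * (S X.1.2 * S s.1))).
    by rewrite linear_sum; apply: eq_bigr => v _; rewrite mulr1 !(S_antimul QA) !mulrA.
  by rewrite -mulr_suml -mulr_sumr (antipode_beta QA) -scalerAr -scalerAl linearZ /= !mulrA.
under eq_bigr do rewrite mulrCA.
by rewrite -mulr_sumr (counitl_sum QB (premul g _)) /= mulr1 (S_antimul QA) /c !mulrA.
Qed.

Definition Xi (f g : {scalar H}) c d :=
  \sum_(y <- phiinv) \sum_(z <- phiinv) \sum_(v <- Delta z.1.2)
    f (S z.1.1 * S y.1.1 * alpha * y.1.2 * v.1 * beta * S v.2 * S y.2 * S c) * g (d * z.2).

Lemma antipode_eval_DeltaHH f g :
  antipode_eval f g
    (mul4 (mul4 (DeltaHH Delta phi) (tens_one phiinv)) (HDeltaH Delta phiinv)) =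
  \sum_(Y <- phi) eps Y.1.1 * Xi f g Y.1.2 Y.2.
Proof.
rewrite /antipode_eval !big_allpairs_dep; apply: eq_bigr => Y _; rewrite mulr_sumr.
under eq_bigr do rewrite big_map.
under eq_bigr do under eq_bigr do rewrite big_allpairs_dep.
rewrite exchange_big; apply: eq_bigr => y _.
rewrite mulr_sumr exchange_big; apply: eq_bigr => z _.
rewrite mulr_sumr exchange_big; apply: eq_bigr => v _.
rewrite /= -mulr_suml [RHS]mulrA mulr1; congr (_ * _).
transitivity (f (\sum_(c <- Delta Y.1.1) (S z.1.1 * S y.1.1) * (S c.1 * alpha * c.2) *
   (y.1.2 * v.1 * beta * S v.2 * S y.2 * S Y.1.2))).
  by rewrite linear_sum; apply: eq_bigr => c _; rewrite !(S_antimul QA) !mulrA.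
rewrite -mulr_suml -mulr_sumr (antipode_alpha QA) -scalerAr -scalerAl linearZ /=.
by rewrite !mulrA.
Qed.

Lemma Xi_scalar f g : (forall d, scalar (Xi f g ^~ d)) /\ (forall c, scalar (Xi f g c)).
Proof.
split=> [d|c]; do 3 apply: scalar_sum => ?.
  by apply: scalar_mulr; scalar_product.
by apply: scalar_mull; exact: scalarP (postmul g _).
Qed.

Lemma Xi_counit1 f g : \sum_(Y <- phi) eps Y.1.1 * Xi f g Y.1.2 Y.2 = Xi f g 1 1.
Proof.
have [Xi1 Xi2] := Xi_scalar f g.
transitivity (\sum_(p <- [seq (eps p.1.1 *: p.1.2, p.2) | p <- phi]) Xi f g p.1 p.2).
  by rewrite big_map; apply: eq_bigr => Y _; exact/esym/(scalarZ (scalar_of (Xi1 Y.2))).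
by rewrite (teq2_bilinear Xi1 Xi2 (counit1_phi QB)) big_seq1.
Qed.

Lemma Xi11 f g : Xi f g 1 1 = f 1 * g 1.
Proof.
transitivity (\sum_(y <- phiinv) \sum_(z <- phiinv)
    eps z.1.2 * (f (S z.1.1 * (S y.1.1 * alpha * y.1.2 * beta * S y.2)) * g z.2)).
  apply: eq_bigr => y _; apply: eq_bigr => z _.
  rewrite -mulr_suml [RHS]mulrA mul1r; congr (_ * _).
  transitivity (f (\sum_(v <- Delta z.1.2) (S z.1.1 * S y.1.1 * alpha * y.1.2) *
      (v.1 * beta * S v.2) * (S y.2 * S 1))).
    by rewrite linear_sum; apply: eq_bigr => v _; rewrite !mulrA.
  rewrite -mulr_suml -mulr_sumr (antipode_beta QA) -scalerAr -scalerAl linearZ /=.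
  by rewrite (S_one QA) mulr1 !mulrA.
rewrite exchange_big /=.
transitivity (\sum_(z <- phiinv) eps z.1.2 * (f (S z.1.1) * g z.2)).
  apply: eq_bigr => z _; rewrite -mulr_sumr -mulr_suml -linear_sum -mulr_sumr.
  by rewrite (antipode_phiinv QA) mulr1.
have F1 d : scalar (fun c => f (S c) * g d) by apply: scalar_mulr; scalar_product.
have F2 c : scalar (fun d => f (S c) * g d) by apply: scalar_mull; apply: scalarP.
transitivity (\sum_(p <- [seq (p.1.1, eps p.1.2 *: p.2) | p <- phiinv]) f (S p.1) * g p.2).
  by rewrite big_map; apply: eq_bigr => z _; rewrite linearZ /= mulrCA.
by rewrite (teq2_bilinear F1 F2 (counit2_phiinv QB)) big_seq1 /= (S_one QA).
Qed.

Lemma Lambda_qL_Delta_id f g b :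
  \sum_(r <- qL) \sum_(q <- Delta b) Lambda f g (r.1 * q.1) (r.2 * q.2) = f 1 * g b.
Proof.
rewrite Lambda_qL_Delta (antipode_eval_teq _ _ (_ : teq4 _
  (mul4 (HHDelta Delta phiinv) (one_tens (mul3 phi (Delta_id_Delta Delta b)))))).
  rewrite antipode_eval_Delta_id_Delta (antipode_eval_teq _ _ (inv_pentagon QB)).
  by rewrite antipode_eval_DeltaHH Xi_counit1 Xi11 /= mul1r.
by rewrite (quasi_coassoc QB b).
Qed.

Lemma Lambda_Gamma f g t :
  \sum_(z <- Gamma t) Lambda f g z.1 z.2 = \sum_(p <- t) f p.1 * g p.2.
Proof.
rewrite big_flatten big_map; apply: eq_bigr => p _.
rewrite !big_allpairs_dep big_seq1.
transitivity (premul f p.1 1 * g p.2); last by rewrite /= mulr1.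
rewrite -Lambda_qL_Delta_id; apply: eq_bigr => r _; apply: eq_bigr => q _.
rewrite /= mul1r; apply: eq_bigr => X _; apply: eq_bigr => q' _; by rewrite /= !mulrA.
Qed.

Lemma Lambda_scalar f g :
  (forall d, scalar (Lambda f g ^~ d)) /\ (forall c, scalar (Lambda f g c)).
Proof.
split=> [d|c].
  by do 2 apply: scalar_sum => ?; apply: scalar_mulr; scalar_product.
apply: scalar_sum => X.
have f_scalar : scalar (fun y => f (c * X.1.1 * beta * S (y * X.1.2))) by scalar_product.
exact: conv_subproof QB (scalar_of f_scalar) (postmul g X.2).
Qed.

Lemma sum_Gamma_beta_S (f : {scalar H}) t :
  \sum_(z <- Gamma t) f (z.1 * beta * S z.2) = \sum_(p <- t) f p.1 * eps p.2.
Proof.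
rewrite big_flatten big_map; apply: eq_bigr => p _.
rewrite !big_allpairs_dep big_seq1 big_map.
transitivity (f (\sum_(x <- phiinv) p.1 * (S x.1.1 * alpha * x.1.2) *
    (\sum_(q <- Delta p.2) q.1 * beta * S q.2) * S x.2)).
  rewrite linear_sum; apply: eq_bigr => x _; rewrite mulr_sumr mulr_suml linear_sum.
  by apply: eq_bigr => q _ /=; rewrite mul1r !(S_antimul QA) !mulrA.
rewrite (antipode_beta QA).
under eq_bigr do rewrite -scalerAr -scalerAl -!mulrA.
rewrite -scaler_sumr linearZ /= -mulr_sumr.
under eq_bigr do rewrite !mulrA.
by rewrite (antipode_phiinv QA) mulr1 mulrC.
Qed.

Lemma qL_counit : \sum_(p <- qL) eps p.2 *: p.1 = alpha.
Proof.
apply: eq_from_scalars => f; rewrite linear_sum big_map.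
have F1 d : scalar (fun c => f (S c * alpha * d)) by scalar_product.
have F2 c : scalar (fun d => f (S c * alpha * d)) by scalar_product.
have := teq2_bilinear F1 F2 (counit3_phiinv QB).
rewrite !big_map big_seq1 /= (S_one QA) mul1r mulr1 => <-.
by apply: eq_bigr => p _; rewrite -scalerAr.
Qed.

End QuasiHopf.

Lemma linear_inj_surj (k : fieldType) (V : vectType k) (F : V -> V) :
  linear F -> (forall x, F x = 0 -> x = 0) -> forall y, exists x, F x = y.
Proof.
move=> F_linear F_inj y.
pose f := linfun (HB.pack_for {linear V -> V} F (GRing.isLinear.Build k V V *:%R F F_linear)).
have kerf : lker f == 0%VS.
  apply/lker0P => u v; rewrite !lfunE /= => Fuv; apply/eqP; rewrite -subr_eq0; apply/eqP.
  by apply: F_inj; rewrite -[u - v]addrC -scaleN1r F_linear Fuv scaleN1r addNr.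
by exists ((f^-1)%VF y); have := lker0_lfunVK kerf y; rewrite lfunE.
Qed.

Section SubQuasiHopf.
Variables (k : fieldType) (H : algType k).
Variables (Delta : H -> tens2 H) (eps : H -> k) (phi phiinv : tens3 H).
Variables (S : H -> H) (alpha beta : H).
Hypothesis QB : quasibialgebra Delta eps phi phiinv.
Hypothesis QA : quasi_antipode Delta eps phi phiinv S alpha beta.
Variable K : pred H.
Hypothesis K1 : 1 \in K.
Hypothesis K_lincomb : forall a x y, x \in K -> y \in K -> a *: x + y \in K.
Hypothesis KM : forall x y, x \in K -> y \in K -> x * y \in K.
Hypothesis K_Delta : forall x, x \in K -> in_tensor2 K (Delta x).
Hypothesis K_qL : in_tensor2 K (qL phiinv S alpha).

HB.instance Definition _ := GRing.isLinear.Build k H k^o *%R eps (eps_linear QB).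
HB.instance Definition _ := GRing.isLinear.Build k H H *:%R S (S_linear QA).

Lemma K0 : 0 \in K.
Proof. by have := K_lincomb (-1) K1 K1; rewrite scaleN1r addNr. Qed.

Lemma KZ a x : x \in K -> a *: x \in K.
Proof. by move=> Kx; have := K_lincomb a Kx K0; rewrite addr0. Qed.

Lemma K_sum (I : eqType) (r : seq I) (F : I -> H) :
  (forall i, i \in r -> F i \in K) -> \sum_(i <- r) F i \in K.
Proof.
move=> KF; rewrite big_seq; apply: (big_ind (fun x => x \in K)) => //; first exact: K0.
by move=> x y Kx Ky; have := K_lincomb 1 Kx Ky; rewrite scale1r.
Qed.

Lemma in_tensor2_cat t u : in_tensor2 K t -> in_tensor2 K u -> in_tensor2 K (t ++ u).
Proof.
move=> [t' [t'K tt']] [u' [u'K uu']]; exists (t' ++ u'); split.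
  by move=> p; rewrite mem_cat => /orP [/t'K|/u'K].
by move=> f f'; rewrite !big_cat tt' uu'.
Qed.

Lemma in_tensor2_mul t u : in_tensor2 K t -> in_tensor2 K u -> in_tensor2 K (mul2 t u).
Proof.
move=> [t' [t'K tt']] [u' [u'K uu']]; exists (mul2 t' u'); split; last exact: mul2_teq.
move=> _ /allpairsPdep [p [q [pt' qu' ->]]] /=.
by case/andP: (t'K p pt') => Kp1 Kp2; case/andP: (u'K q qu') => Kq1 Kq2; rewrite !KM.
Qed.

Lemma Gamma_in_K t : (forall p, p \in t -> (p.1 \in K) && (p.2 \in K)) ->
  in_tensor2 K (Gamma Delta phiinv S alpha t).
Proof.
elim: t => [|p t IH] tK; first by exists [::].
apply: in_tensor2_cat; last by apply: IH => q qt; apply: tK; rewrite inE qt orbT.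
case/andP: (tK p (mem_head _ _)) => Kp1 Kp2.
apply: in_tensor2_mul; last exact: K_Delta.
apply: in_tensor2_mul => //; exists [:: (p.1, 1)]; split => //.
by move=> q; rewrite inE => /eqP -> /=; rewrite Kp1 K1.
Qed.

Lemma counit_contract_in_K t : in_tensor2 K t -> \sum_(p <- t) eps p.2 *: p.1 \in K.
Proof.
move=> [u [uK tu]].
have -> : \sum_(p <- t) eps p.2 *: p.1 = \sum_(p <- u) eps p.2 *: p.1.
  apply: eq_from_scalars => f; rewrite !linear_sum.
  have fE p : f (eps p.2 *: p.1) = f p.1 * eps p.2 by rewrite linearZ /= mulrC.
  by rewrite !(eq_bigr _ (fun p _ => fE p)) (tu f eps).
by apply: K_sum => p /uK /andP [Kp1 _]; apply: KZ.
Qed.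

Lemma alpha_in_K : alpha \in K.
Proof. by rewrite -(qL_counit QB QA); apply: counit_contract_in_K. Qed.

Section DualBasis.
Variables (n : nat) (w : 'I_n -> H) (g : 'I_n -> {scalar H}).
Hypothesis wK : forall i, w i \in K.
Hypothesis gw : forall i j, g i (w j) = (i == j)%:R.
Hypothesis g_coord : forall y, y \in K -> y = \sum_i g i y *: w i.

Definition tensor_coord (t : tens2 H) : 'M[k]_n :=
  \matrix_(a, b) \sum_(p <- t) g a p.1 * g b p.2.

Definition mx_tensor (M : 'M[k]_n) : tens2 H :=
  [seq (M i j *: w i, w j) | i <- index_enum 'I_n, j <- index_enum 'I_n].

Lemma sum_mx_tensor M (F : H -> H -> k) :
  \sum_(p <- mx_tensor M) F p.1 p.2 = \sum_i \sum_j F (M i j *: w i) (w j).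
Proof. exact: big_allpairs_dep. Qed.

Lemma mx_tensor_in_K M p : p \in mx_tensor M -> (p.1 \in K) && (p.2 \in K).
Proof. by move=> /allpairsPdep [i [j [_ _ ->]]] /=; rewrite KZ ?wK. Qed.

Lemma tensor_coordK : cancel mx_tensor tensor_coord.
Proof.
move=> M; apply/matrixP => a b; rewrite mxE (sum_mx_tensor M (fun x y => g a x * g b y)).
under eq_bigr do under eq_bigr do rewrite linearZ /= !gw.
rewrite (bigD1 a) //= (bigD1 b) //= !eqxx !mulr1 big1 => [|j /negbTE bj]; last first.
  by rewrite eq_sym bj mulr0.
rewrite big1 => [|i /negbTE ai]; first by rewrite !addr0.
by rewrite big1 // => j _; rewrite eq_sym ai mulr0 mul0r.
Qed.

Lemma tensor_coord_teq t u : teq2 t u -> tensor_coord t = tensor_coord u.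
Proof. by move=> tu; apply/matrixP => a b; rewrite !mxE tu. Qed.

Lemma tensor_coordP t : in_tensor2 K t -> teq2 t (mx_tensor (tensor_coord t)).
Proof.
move=> [u [uK tu]]; rewrite (tensor_coord_teq tu) tu => f f'.
rewrite (sum_mx_tensor _ (fun x y => f x * f' y)).
transitivity (\sum_(p <- u) \sum_i \sum_j g i p.1 * g j p.2 * (f (w i) * f' (w j))).
  rewrite big_seq_cond [RHS]big_seq_cond; apply: eq_bigr => p /andP [pu _].
  case/andP: (uK p pu) => /g_coord {1}-> /g_coord {1}->.
  rewrite !linear_sum mulr_suml; apply: eq_bigr => i _.
  by rewrite mulr_sumr; apply: eq_bigr => j _; rewrite !linearZ /= mulrACA.
rewrite exchange_big; apply: eq_bigr => i _; rewrite exchange_big; apply: eq_bigr => j _.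
by rewrite -mulr_suml mxE linearZ /= mulrA.
Qed.

Definition Gamma_mx (M : 'M[k]_n) : 'M[k]_n :=
  tensor_coord (Gamma Delta phiinv S alpha (mx_tensor M)).

Lemma Gamma_mxE M : Gamma_mx M = \matrix_(a, b) \sum_i \sum_j M i j *
  \sum_(r <- qL phiinv S alpha) \sum_(q <- Delta (w j)) g a (w i * r.1 * q.1) * g b (r.2 * q.2).
Proof.
apply/matrixP => a b; rewrite !mxE big_flatten big_map (sum_mx_tensor M (fun c d =>
  \sum_(z <- mul2 (mul2 [:: (c, 1)] (qL phiinv S alpha)) (Delta d)) g a z.1 * g b z.2)).
apply: eq_bigr => i _; apply: eq_bigr => j _.
rewrite !big_allpairs_dep big_seq1 mulr_sumr; apply: eq_bigr => r _.
rewrite mulr_sumr; apply: eq_bigr => q _ /=.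
by rewrite -!scalerAl linearZ /= mul1r mulrA.
Qed.

Lemma Gamma_mx_linear : linear Gamma_mx.
Proof.
move=> c M N; rewrite !Gamma_mxE; apply/matrixP => a b; rewrite !mxE mulr_sumr -big_split.
apply: eq_bigr => i _; rewrite mulr_sumr -big_split; apply: eq_bigr => j _.
by rewrite !mxE mulrDl mulrA.
Qed.

Lemma Gamma_mx_inj M : Gamma_mx M = 0 -> M = 0.
Proof.
move=> GM0; have GammaM : teq2 (Gamma Delta phiinv S alpha (mx_tensor M)) (mx_tensor 0).
  rewrite -GM0; apply: tensor_coordP; apply: Gamma_in_K; exact: mx_tensor_in_K.
have sumM0 (f f' : {scalar H}) : \sum_(p <- mx_tensor M) f p.1 * f' p.2 = 0.
  have [L1 L2] := Lambda_scalar QB QA f f'.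
  rewrite -(Lambda_Gamma QB QA) (teq2_bilinear L1 L2 GammaM) sum_mx_tensor big1 // => i _.
  by rewrite big1 // => j _; rewrite mxE scale0r; exact: (linear0 (scalar_of (L1 _))).
by rewrite -[M]tensor_coordK; apply/matrixP => a b; rewrite !mxE sumM0.
Qed.

Lemma Gamma_onto_K t :
  in_tensor2 K t -> exists M, teq2 t (Gamma Delta phiinv S alpha (mx_tensor M)).
Proof.
move=> tK; have [M GM] := linear_inj_surj Gamma_mx_linear Gamma_mx_inj (tensor_coord t).
exists M; rewrite (tensor_coordP tK) -GM; symmetry; apply: tensor_coordP.
by apply: Gamma_in_K; apply: mx_tensor_in_K.
Qed.

Lemma sum_beta_S_in_K t : in_tensor2 K t -> \sum_(p <- t) p.1 * beta * S p.2 \in K.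
Proof.
move=> /Gamma_onto_K [M tGM].
have -> : \sum_(p <- t) p.1 * beta * S p.2 = \sum_i \sum_j eps (w j) *: (M i j *: w i).
  apply: eq_from_scalars => f; rewrite !linear_sum.
  have F1 d : scalar (fun c => f (c * beta * S d)) by scalar_product.
  have F2 c : scalar (fun d => f (c * beta * S d)) by scalar_product.
  rewrite (teq2_bilinear F1 F2 tGM) (sum_Gamma_beta_S QA).
  rewrite (sum_mx_tensor M (fun c d => f c * eps d)); apply: eq_bigr => i _.
  by rewrite linear_sum; apply: eq_bigr => j _; rewrite [RHS]linearZ /= mulrC.
by apply: K_sum => i _; apply: K_sum => j _; apply/KZ/KZ.
Qed.

Lemma beta_in_K : beta \in K.
Proof.
have := sum_beta_S_in_K (_ : in_tensor2 K (one2 H)).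
rewrite big_seq1 /= (S_one QA) mulr1 mul1r; apply.
by exists (one2 H); split => // p; rewrite inE => /eqP -> /=; rewrite K1.
Qed.

Lemma S_in_K x : x \in K -> S x \in K.
Proof.
move=> Kx; have [u [uK qLu]] := K_qL.
have qLx : in_tensor2 K [seq (r.1, x * r.2) | r <- qL phiinv S alpha].
  exists [seq (r.1, x * r.2) | r <- u]; split.
    by move=> _ /mapP [r ru ->] /=; case/andP: (uK r ru) => -> Kr2; rewrite KM.
  by move=> f f'; rewrite big_map [RHS]big_map; exact: qLu f (premul f' x).
have := sum_beta_S_in_K qLx; rewrite !big_map.
suff -> : \sum_(p <- phiinv) S p.1.1 * alpha * p.1.2 * beta * S (x * p.2) = S x by [].
rewrite -[RHS]mul1r -(antipode_phiinv QA) mulr_suml; apply: eq_bigr => p _.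
by rewrite (S_antimul QA) !mulrA.
Qed.

End DualBasis.

End SubQuasiHopf.

Theorem proposition2p3 (k : fieldType) (H : algType k)
  (Delta : H -> seq (H * H)%type) (eps : H -> k) (phi phiinv : seq (H * H * H)%type)
  (S : H -> H) (alpha beta : H) (K : pred H) :
  quasi_hopf Delta eps phi phiinv S alpha beta ->
  subquasibialgebra Delta phi K ->
  finite_dim K ->
  in_tensor2 K [seq (S p.1.1 * alpha * p.1.2, p.2) | p <- phiinv] ->
  [/\ alpha \in K, beta \in K & forall x : H, x \in K -> S x \in K].
Proof.
move=> [QB QA] [K1 K_lincomb KM K_Delta _] [s [sK s_span]] K_qL.
have [n [w [g [ws gw g_coord]]]] := dual_basis s.
have wK i : w i \in K by apply/sK/ws.
have g_coordK y : y \in K -> y = \sum_i g i y *: w i.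
  by move=> /s_span [c ->]; apply/g_coord/span_lincomb.
split.
- exact (alpha_in_K QB QA K1 K_lincomb K_qL).
- exact (beta_in_K QB QA K1 K_lincomb KM K_Delta K_qL wK gw g_coordK).
- exact (S_in_K QB QA K1 K_lincomb KM K_Delta K_qL wK gw g_coordK).
Qed.
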